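(* Let $V$ be a finite-dimensional normed mixed lattice space (i.e. its topology is given by a mixed lattice norm). If the cone $V_{sp}$ is generating ($V=V_{sp}-V_{sp}$), then $(V,\preccurlyeq)$ is a lattice.
   Context: A mixed lattice vector space $(V,\le,\preccurlyeq)$ is a real vector space $V$ with two partial orderings $\le$ (initial order) and $\preccurlyeq$ (specific order), each making $V$ a partially ordered vector space, with positive cones $V_p=\{x:0\le x\}$, $V_{sp}=\{x:0\preccurlyeq x\}$, such that: (1) for all $x,y$ the elements $x\curlyvee y=\min\{w: w\succcurlyeq x,\ w\ge y\}$ and $x\curlywedge y=\max\{w: w\preccurlyeq x,\ w\le y\}$ exist (min/max with respect to $\le$); (2) $x\preccurlyeq y$ implies $x\le y$; (3) $x\curlyvee y, x\curlywedge y\in V_{sp}$ whenever $x,y\in V_{sp}$. Notation: $x^u=0\curlyvee x$, $x^l=0\curlyvee(-x)$, $s(x)=x^u+x^l$. A norm $\rho$ on $V$ is a mixed lattice norm if $s(x)\le s(y)$ implies $\rho(x)\le\rho(y)$. *)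

From HB Require Import structures.
From mathcomp Require Import all_boot all_order all_algebra.
From mathcomp Require Import reals.
Set Implicit Arguments. Unset Strict Implicit. Unset Printing Implicit Defensive.
Import Order.TTheory GRing.Theory Num.Theory.
Local Open Scope ring_scope.

Section MixedLattice.
Variables (R : realType) (V : lmodType R).

Definition povs (le : V -> V -> Prop) : Prop :=
  [/\ (forall x, le x x),
      (forall x y, le x y -> le y x -> x = y),
      (forall x y z, le x y -> le y z -> le x z),
      (forall x y z, le x y -> le (x + z) (y + z)) &
      (forall (a : R) x y, 0 <= a -> le x y -> le (a *: x) (a *: y))].

(* w = x ⋎ y : the <=-least w with x ≼ w and y <= w *)
Definition is_mixed_upper (le sle : V -> V -> Prop) (x y w : V) : Prop :=
  [/\ sle x w, le y w & forall w', sle x w' -> le y w' -> le w w'].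

(* w = x ⋏ y : the <=-greatest w with w ≼ x and w <= y *)
Definition is_mixed_lower (le sle : V -> V -> Prop) (x y w : V) : Prop :=
  [/\ sle w x, le w y & forall w', sle w' x -> le w' y -> le w' w].

Definition mixed_lattice_space (le sle : V -> V -> Prop) : Prop :=
  povs le /\ povs sle /\
  (forall x y, exists w, is_mixed_upper le sle x y w) /\
  (forall x y, exists w, is_mixed_lower le sle x y w) /\
  (forall x y, sle x y -> le x y) /\
  (forall x y, sle 0 x -> sle 0 y ->
     (forall w, is_mixed_upper le sle x y w -> sle 0 w) /\
     (forall w, is_mixed_lower le sle x y w -> sle 0 w)).

Definition s_of (le sle : V -> V -> Prop) (x s : V) : Prop :=
  exists u l, is_mixed_upper le sle 0 x u /\ is_mixed_upper le sle 0 (- x) l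
              /\ s = u + l.

Definition is_norm (rho : V -> R) : Prop :=
  [/\ (forall x, rho x = 0 -> x = 0),
      (forall (a : R) x, rho (a *: x) = `|a| * rho x) &
      (forall x y, rho (x + y) <= rho x + rho y)].

Definition mixed_lattice_norm (le sle : V -> V -> Prop) (rho : V -> R) : Prop :=
  is_norm rho /\
  forall x y sx sy, s_of le sle x sx -> s_of le sle y sy -> le sx sy -> rho x <= rho y.

Definition generating_cone (sle : V -> V -> Prop) : Prop :=
  forall v, exists a b, sle 0 a /\ sle 0 b /\ v = a - b.

Definition is_sup (ord : V -> V -> Prop) (x y w : V) : Prop :=
  [/\ ord x w, ord y w & forall w', ord x w' -> ord y w' -> ord w w'].

Definition is_inf (ord : V -> V -> Prop) (x y w : V) : Prop :=
  [/\ ord w x, ord w y & forall w', ord w' x -> ord w' y -> ord w' w].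

Definition is_lattice (ord : V -> V -> Prop) : Prop :=
  forall x y, (exists w, is_sup ord x y w) /\ (exists w, is_inf ord x y w).

End MixedLattice.

(* A supremum of x and 0 for the specific order is obtained as a <=-least
   element u of the set U of common specific upper bounds of 0 and x: for any
   w in U, the mixed infimum w ⋏ u again lies in U and sits below u, so it
   equals u and u ≼ w.  Such a <=-least element exists by compactness.  The
   norm is monotone on the specific cone, so the part of U below a fixed
   a ∈ U is bounded; both cones are closed, so that part is compact; and the
   closed sets {w | w <= v}, v ∈ U, meet it with the finite intersection
   property because U is directed downwards under ⋏.  Since the specific
   cone is generating, every x has a specific upper bound a ∈ U. *)
From HB Require Import structures.
From mathcomp Require Import all_boot all_order all_algebra.
From mathcomp Require Import all_classical all_reals all_analysis.
From mathcomp Require Import lra.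
Import Order.TTheory GRing.Theory Num.Theory.
Import numFieldNormedType.Exports.
Set Implicit Arguments. Unset Strict Implicit.
Local Open Scope classical_set_scope.
Local Open Scope ring_scope.

Section PartiallyOrderedVectorSpace.
Variables (R : realType) (V : lmodType R) (ord : V -> V -> Prop).
Hypothesis ordP : povs ord.

Lemma povs_refl x : ord x x.
Proof. by case: ordP. Qed.

Lemma povs_anti x y : ord x y -> ord y x -> x = y.
Proof. by case: ordP => _ anti *; apply: anti. Qed.

Lemma povs_trans x y z : ord x y -> ord y z -> ord x z.
Proof. by case: ordP => _ _ trans *; apply: trans; eauto. Qed.

Lemma povs_addr x y z : ord x y -> ord (x + z) (y + z).
Proof. by case: ordP => _ _ _ addr *; apply: addr. Qed.

Lemma povs_subr_ge0 x y : ord 0 (y - x) <-> ord x y.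
Proof.
split=> h; last by have := povs_addr (- x) h; rewrite subrr.
by have := povs_addr x h; rewrite add0r subrK.
Qed.

Lemma povs_add a b c d : ord a b -> ord c d -> ord (a + c) (b + d).
Proof.
move=> hab hcd; apply: (povs_trans (povs_addr c hab)).
by rewrite ![b + _]addrC; apply: povs_addr.
Qed.

Lemma povs_opp x y : ord x y -> ord (- y) (- x).
Proof.
move=> h; have := povs_addr (- x - y) h.
by rewrite addrA subrr add0r addrCA subrr addr0.
Qed.

Lemma povs_subl c x y : ord x y -> ord (c - y) (c - x).
Proof. by move=> /povs_opp h; rewrite ![c - _]addrC; apply: povs_addr. Qed.

Lemma lattice_of_sup0 :
  (forall x, exists u, is_sup ord 0 x u) -> is_lattice ord.
Proof.
move=> hsup x y; have [u [u0 xyu umin]] := hsup (x - y).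
have [sx sy smin] : is_sup ord x y (u + y).
  split; first by have := povs_addr y xyu; rewrite subrK.
    by have := povs_addr y u0; rewrite add0r.
  move=> w xw yw; rewrite -(subrK y w); apply: povs_addr; apply: umin.
    by have := povs_addr (- y) yw; rewrite subrr.
  exact: povs_addr.
split; first by exists (u + y).
(* reflection v |-> x + y - v exchanges upper and lower bounds of {x, y} *)
exists (x + y - (u + y)); split.
- by have := povs_subl (x + y) sy; rewrite addrK.
- by have := povs_subl (x + y) sx; rewrite [x + y - x]addrC addKr.
- move=> w wx wy.
  have xw : ord x (x + y - w) by have := povs_subl (x + y) wy; rewrite addrK.
  have yw : ord y (x + y - w).
    by have := povs_subl (x + y) wx; rewrite [x + y - x]addrC addKr.
  by have := povs_subl (x + y) (smin _ xw yw); rewrite subKr.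
Qed.

End PartiallyOrderedVectorSpace.

Section Norm.
Variables (R : realType) (V : lmodType R) (rho : V -> R).
Hypothesis rhoP : is_norm rho.

Lemma rho_eq0 x : rho x = 0 -> x = 0.
Proof. by case: rhoP => h _ _; apply: h. Qed.

Lemma rhoZ a x : rho (a *: x) = `|a| * rho x.
Proof. by case: rhoP. Qed.

Lemma rhoD x y : rho (x + y) <= rho x + rho y.
Proof. by case: rhoP. Qed.

Lemma rho0 : rho 0 = 0.
Proof. by have := rhoZ 0 0; rewrite scale0r normr0 mul0r. Qed.

Lemma rhoN x : rho (- x) = rho x.
Proof. by rewrite -scaleN1r rhoZ normrN normr1 mul1r. Qed.

Lemma rho_ge0 x : 0 <= rho x.
Proof.
have := rhoD x (- x); rewrite subrr rho0 rhoN => h.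
by rewrite -(@pmulr_rge0 _ 2) // mulr2n mulrDl !mul1r.
Qed.

Lemma rho_sum (I : finType) (F : I -> V) : rho (\sum_i F i) <= \sum_i rho (F i).
Proof.
apply: (big_ind2 (fun a b => rho a <= b)); [by rewrite rho0 | | by []].
by move=> a1 b1 a2 b2 h1 h2; apply: (le_trans (rhoD _ _)); apply: lerD.
Qed.

Lemma rho_dist x y : `|rho x - rho y| <= rho (x - y).
Proof.
have := rhoD y (x - y); have := rhoD x (y - x).
rewrite ![_ + (_ - _)]addrC !subrK -opprB rhoN => h1 h2.
rewrite ler_norml; apply/andP; split; lra.
Qed.

Lemma rho_small_eq0 x : (forall e, 0 < e -> rho x < e) -> x = 0.
Proof.
move=> small; apply: rho_eq0; apply/eqP; rewrite eq_le rho_ge0 andbT.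
by rewrite leNgt; apply/negP => /small; rewrite ltxx.
Qed.

Definition rho_closed (Q : V -> Prop) : Prop :=
  forall w, (forall e, 0 < e -> exists w', Q w' /\ rho (w' - w) < e) -> Q w.

Lemma rho_closedI (P Q : V -> Prop) :
  rho_closed P -> rho_closed Q -> rho_closed (fun w => P w /\ Q w).
Proof.
move=> cP cQ w approx; split; [apply: cP | apply: cQ] => e e0;
  by have [w' [[? ?] ?]] := approx e e0; exists w'.
Qed.

End Norm.

Section MixedLatticeSpace.
Variables (R : realType) (V : lmodType R) (le sle : V -> V -> Prop).
Hypothesis mlP : mixed_lattice_space le sle.

Lemma povs_le : povs le.
Proof. by case: mlP. Qed.

Lemma povs_sle : povs sle.
Proof. by case: mlP => _ []. Qed.

Lemma mixed_upper_exists x y : exists w, is_mixed_upper le sle x y w.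
Proof. by case: mlP => _ [_ []]. Qed.

Lemma mixed_lower_exists x y : exists w, is_mixed_lower le sle x y w.
Proof. by case: mlP => _ [_ [_ []]]. Qed.

Lemma sle_le x y : sle x y -> le x y.
Proof. by case: mlP => _ [_ [_ [_ []]]] h _; apply: h. Qed.

Lemma mixed_lower_ge0 x y w :
  sle 0 x -> sle 0 y -> is_mixed_lower le sle x y w -> sle 0 w.
Proof. by case: mlP => _ [_ [_ [_ [_ h]]]] x0 y0; case: (h _ _ x0 y0) => _; apply. Qed.

Lemma mixed_upper_ge0 z u : is_mixed_upper le sle 0 z u -> sle 0 u.
Proof. by case. Qed.

Lemma mixed_lowerDr x y w z : is_mixed_lower le sle x y w ->
  is_mixed_lower le sle (x + z) (y + z) (w + z).
Proof.
case=> wx wy wmax; split; [exact: (povs_addr povs_sle) | exact: (povs_addr povs_le) |].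
move=> w' w'x w'y; rewrite -(subrK z w'); apply: (povs_addr povs_le); apply: wmax.
  by have := povs_addr povs_sle (- z) w'x; rewrite addrK.
by have := povs_addr povs_le (- z) w'y; rewrite addrK.
Qed.

Lemma mixed_lower_sup0_ub x v w m :
  sle 0 v -> sle x v -> sle 0 w -> sle x w -> is_mixed_lower le sle v w m ->
  sle 0 m /\ sle x m.
Proof.
move=> v0 xv w0 xw hm; split; first exact: (mixed_lower_ge0 v0 w0 hm).
apply/(povs_subr_ge0 povs_sle).
apply: (mixed_lower_ge0 _ _ (mixed_lowerDr (- x) hm)); exact/(povs_subr_ge0 povs_sle).
Qed.

Lemma le_least_sle_least x u :
  sle 0 u -> sle x u -> (forall w, sle 0 w -> sle x w -> le u w) ->
  is_sup sle 0 x u.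
Proof.
move=> u0 xu umin; split=> // w w0 xw.
have [m hm] := mixed_lower_exists w u.
have [m0 xm] := mixed_lower_sup0_ub w0 xw u0 xu hm.
case: hm => mw mu _.
by rewrite (povs_anti povs_le (umin m m0 xm) mu).
Qed.

Lemma mixed_upper_pos w : sle 0 w -> is_mixed_upper le sle 0 w w.
Proof. by move=> w0; split=> //; exact: (povs_refl povs_le). Qed.

Lemma mixed_upper_neg y : le 0 y -> is_mixed_upper le sle 0 (- y) 0.
Proof.
move=> y0; split; first exact: (povs_refl povs_sle).
  by have := povs_opp povs_le y0; rewrite oppr0.
by move=> w' /sle_le.
Qed.

Lemma s_of_pos w : sle 0 w -> s_of le sle w w.
Proof.
move=> w0; exists w, 0; split; first exact: mixed_upper_pos.
by split; [apply/mixed_upper_neg/sle_le | rewrite addr0].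
Qed.

Lemma mixed_upper_sub a b p q t :
  is_mixed_upper le sle 0 a p -> is_mixed_upper le sle 0 b q ->
  is_mixed_upper le sle 0 (a - b) t -> le p (q + t).
Proof.
case=> _ _ pmin [q0 bq _] [t0 abt _]; apply: pmin.
  by apply: (povs_trans povs_sle q0); have := povs_addr povs_sle q t0; rewrite add0r addrC.
by have := povs_add povs_le bq abt; rewrite addrC subrK.
Qed.

Lemma mixed_upper_mono y m p q :
  is_mixed_upper le sle 0 y p -> is_mixed_upper le sle 0 m q -> le y m -> le p q.
Proof. by case=> _ _ pmin [q0 mq _] ym; apply: pmin => //; exact: (povs_trans povs_le ym mq). Qed.

Lemma sup0_ub_directed x a (s : seq V) : sle 0 a -> sle x a ->
  (forall v, v \in s -> sle 0 v /\ sle x v) ->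
  exists w, [/\ sle 0 w, sle x w, le w a & forall v, v \in s -> le w v].
Proof.
move=> a0 xa; elim: s => [|v s IH] hs.
  by exists a; split => //; exact: (povs_refl povs_le).
have [|w [w0 xw wa ws]] := IH.
  by move=> v' v's; apply: hs; rewrite in_cons v's orbT.
have [v0 xv] := hs v (mem_head _ _).
have [m hm] := mixed_lower_exists v w.
have [m0 xm] := mixed_lower_sup0_ub v0 xv w0 xw hm.
case: hm => mv mw _.
exists m; split => //; first exact: (povs_trans povs_le mw wa).
move=> v'; rewrite in_cons => /orP [/eqP -> | v's]; first exact: sle_le.
exact: (povs_trans povs_le mw (ws _ v's)).
Qed.

Section MixedLatticeNorm.
Variable rho : V -> R.
Hypothesis rhoP : mixed_lattice_norm le sle rho.

Lemma mixed_lattice_norm_norm : is_norm rho.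
Proof. by case: rhoP. Qed.

Let normP := mixed_lattice_norm_norm.

Lemma rho_sle0_mono a b : sle 0 a -> sle 0 b -> le a b -> rho a <= rho b.
Proof. by case: rhoP => _ mono a0 b0; exact: (mono _ _ _ _ (s_of_pos a0) (s_of_pos b0)). Qed.

Lemma rho_mixed_upper_le z u : is_mixed_upper le sle 0 z u -> rho u <= rho z.
Proof.
move=> zu; have [l zl] := mixed_upper_exists 0 (- z).
case: rhoP => _ mono; apply: (mono _ _ u (u + l) (s_of_pos (mixed_upper_ge0 zu))).
  by exists u, l.
by have := povs_addr povs_le u (sle_le (mixed_upper_ge0 zl)); rewrite add0r addrC.
Qed.

Lemma rho_mixed_upper_ge y u : le 0 y -> is_mixed_upper le sle 0 y u -> rho y <= rho u.
Proof.
move=> y0 yu; case: rhoP => _ mono.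
apply: (mono _ _ (u + 0) u _ (s_of_pos (mixed_upper_ge0 yu))).
  by exists u, 0; split=> //; split=> //; apply: mixed_upper_neg.
by rewrite addr0; exact: (povs_refl povs_le).
Qed.

(* with p = 0 ⋎ v and any c ≽ 0: 0 <= p - v <= (c - v) + 0 ⋎ (v - c), and ρ of the
   right-hand side is at most 2 ρ(c - v) *)
Lemma rho_closed_sle0 : rho_closed rho (sle 0).
Proof.
move=> v approx; have [p vp] := mixed_upper_exists 0 v.
suff : p - v = 0 by move/eqP; rewrite subr_eq0 => /eqP <-; exact: (mixed_upper_ge0 vp).
apply: (rho_small_eq0 normP) => e e0.
have [c [c0 cv]] := approx (e / 2) (divr_gt0 e0 (ltr0Sn _ 1)).
have [t vct] := mixed_upper_exists 0 (v - c).
have pv0 : le 0 (p - v) by case: vp => _ /(povs_subr_ge0 povs_le).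
have pv_le : le (p - v) ((c - v) + t).
  by have := povs_addr povs_le (- v) (mixed_upper_sub vp (mixed_upper_pos c0) vct);
    rewrite addrAC.
have [u1 hu1] := mixed_upper_exists 0 (p - v).
have [u2 hu2] := mixed_upper_exists 0 ((c - v) + t).
apply: (le_lt_trans (rho_mixed_upper_ge pv0 hu1)).
apply: (le_lt_trans (rho_sle0_mono (mixed_upper_ge0 hu1) (mixed_upper_ge0 hu2)
  (mixed_upper_mono hu1 hu2 pv_le))).
apply: (le_lt_trans (rho_mixed_upper_le hu2)).
apply: (le_lt_trans (rhoD normP _ _)).
have := rho_mixed_upper_le vct; rewrite -opprB (rhoN normP) => rt.
apply: (le_lt_trans (lerD (lexx _) rt)).
by rewrite -mulr2n -mulr_natr -ltr_pdivlMr.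
Qed.

Lemma rho_closed_sle x : rho_closed rho (sle x).
Proof.
move=> w approx; apply/(povs_subr_ge0 povs_sle); apply: rho_closed_sle0 => e e0.
have [w' [xw' w'w]] := approx e e0; exists (w' - x); split.
  exact/(povs_subr_ge0 povs_sle).
by rewrite opprB addrA subrK.
Qed.

(* 0 ⋎ (-y) <= 0 ⋎ (c - y) for every c >= 0 *)
Lemma rho_closed_le0 : rho_closed rho (le 0).
Proof.
move=> y approx; have [l yl] := mixed_upper_exists 0 (- y).
suff l0 : l = 0.
  by case: yl => _ + _; rewrite l0 => /(povs_opp povs_le); rewrite oppr0 opprK.
apply: (rho_small_eq0 normP) => e e0.
have [c [c0 cy]] := approx e e0.
have [t yct] := mixed_upper_exists 0 (- y - - c).
have := mixed_upper_sub yl (mixed_upper_neg c0) yct; rewrite add0r => lt.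
apply: (le_lt_trans (rho_sle0_mono (mixed_upper_ge0 yl) (mixed_upper_ge0 yct) lt)).
apply: (le_lt_trans (rho_mixed_upper_le yct)).
by rewrite opprK addrC.
Qed.

Lemma rho_closed_le v : rho_closed rho (le^~ v).
Proof.
move=> w approx; apply/(povs_subr_ge0 povs_le); apply: rho_closed_le0 => e e0.
have [w' [w'v w'w]] := approx e e0; exists (v - w'); split.
  exact/(povs_subr_ge0 povs_le).
by rewrite opprB addrC addrA subrK -opprB (rhoN normP).
Qed.

End MixedLatticeNorm.

End MixedLatticeSpace.

Section FiniteDimensional.
Variables (R : realType) (V : vectType R) (rho : V -> R).
Hypothesis rhoP : is_norm rho.

Local Notation n := (\dim {:V}).
Local Notation e := (vbasis {:V}).

Definition of_coord (r : 'rV[R]_n) : V := passmx.vecof e r.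

Lemma of_coordB r s : of_coord (r - s) = of_coord r - of_coord s.
Proof.
rewrite /of_coord /passmx.vecof -sumrB; apply: eq_bigr => i _.
by rewrite !mxE scalerBl.
Qed.

Lemma of_coordZ a r : of_coord (a *: r) = a *: of_coord r.
Proof.
rewrite /of_coord /passmx.vecof scaler_sumr; apply: eq_bigr => i _.
by rewrite !mxE scalerA.
Qed.

Lemma of_coord_eq0 r : of_coord r = 0 -> r = 0.
Proof. by move/eqP; rewrite /of_coord passmx.vecof_eq0 ?vbasisP // => /eqP. Qed.

Lemma of_coordK v : of_coord (passmx.rVof e v) = v.
Proof. by rewrite /of_coord passmx.rVofK // vbasisP. Qed.

Lemma rho_of_coord_le : exists2 C, 0 <= C & forall r, rho (of_coord r) <= C * `|r|.
Proof.
exists (\sum_(i < n) rho e`_i); first by apply: sumr_ge0 => i _; exact: (rho_ge0 rhoP).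
move=> r; rewrite /of_coord /passmx.vecof mulrC mulr_sumr.
apply: (le_trans (rho_sum rhoP _)); apply: ler_sum => i _.
rewrite (rhoZ rhoP); apply: ler_wpM2r; first exact: (rho_ge0 rhoP).
rewrite (_ : `|r| = mx_norm r) // mx_normrE; apply/bigmax_geP; right => /=.
by exists (0, i).
Qed.

Lemma of_coord_near r (eps : R) : 0 < eps ->
  exists2 d, 0 < d & forall s, ball r d s -> rho (of_coord s - of_coord r) < eps.
Proof.
move=> eps0; have [C C0 hC] := rho_of_coord_le.
have C1 : 0 < C + 1 by apply: ltr_wpDl C0 ltr01.
exists (eps / (C + 1)); first by rewrite divr_gt0.
move=> s; rewrite -ball_normE /= => rs; rewrite -of_coordB.
apply: (le_lt_trans (hC _)); rewrite distrC.
apply: (le_lt_trans (ler_wpM2l C0 (ltW rs))).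
by rewrite -ltr_pdivlMr // ?divr_gt0 // invf_div mulrCA mulfV ?gt_eqF // mulr1 ltrDl.
Qed.

Lemma rho_of_coord_continuous : continuous (fun r => rho (of_coord r)).
Proof.
move=> r; apply/(@cvgrPdist_lt _ _ _ (nbhs r) (nbhs_filter r)) => eps eps0.
have [d d0 hd] := of_coord_near r eps0.
apply/nbhs_ballP; exists d => // s /hd; apply: le_lt_trans.
by rewrite distrC; apply: (rho_dist rhoP).
Qed.

Lemma closed_of_coord (Q : V -> Prop) :
  rho_closed rho Q -> closed [set r | Q (of_coord r)].
Proof.
move=> cQ r rQ; apply: cQ => eps eps0.
have [d d0 hd] := of_coord_near r eps0.
have [|s [Qs rs]] := rQ (ball r d); first exact: nbhsx_ballx.
by exists (of_coord s); split => //; apply: hd.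
Qed.

(* the minimum of ρ ∘ of_coord over the unit sphere is positive *)
Lemma norm_le_rho_of_coord : exists M, forall r, `|r| <= M * rho (of_coord r).
Proof.
pose S := [set r : 'rV[R]_n | `|r| = 1].
have normalize r : r != 0 -> S (`|r|^-1 *: r).
  by move=> r0; rewrite /S /= normrZ normfV normr_id mulVf // normr_eq0.
have [S0|S0] := pselect (S !=set0); last first.
  exists 0 => r; rewrite mul0r; have [-> | r0] := eqVneq r 0; first by rewrite normr0.
  by exfalso; apply: S0; exists (`|r|^-1 *: r); apply: normalize.
have cS : compact S.
  apply: bounded_closed_compact; first by exists 1; split=> // M M1 x Sx; rewrite /= Sx ltW.
  apply: (@preimage_closed _ _ (fun x : 'rV[R]_n => `|x|) [set x : R | x = 1]).
    by move=> y _; apply: norm_continuous.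
  exact: closed_eq.
have [c cS' cmin] :=
  EVT_min_rV S0 cS (continuous_subspaceT rho_of_coord_continuous).
have Sc : S c by move: cS'; rewrite inE.
have c0 : c != 0.
  by apply/eqP => c0; move: Sc; rewrite /S /= c0 normr0 => /eqP; rewrite eq_sym oner_eq0.
have m0 : 0 < rho (of_coord c).
  rewrite lt_def (rho_ge0 rhoP) andbT; apply/eqP => /(rho_eq0 rhoP) /of_coord_eq0 /eqP.
  exact/negP.
exists (rho (of_coord c))^-1 => r.
have [-> | r0] := eqVneq r 0; first by rewrite normr0 mulr_ge0 ?invr_ge0 ?(rho_ge0 rhoP) ?ltW.
have := cmin _ (mem_set (normalize _ r0)).
rewrite of_coordZ (rhoZ rhoP) normfV normr_id => h.
have r0' : 0 < `|r| by rewrite normr_gt0.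
by rewrite mulrC ler_pdivlMr //; move: h; rewrite ler_pdivlMl.
Qed.

Lemma compact_of_coord (Q : V -> Prop) (b : R) :
  rho_closed rho Q -> (forall v, Q v -> rho v <= b) -> compact [set r | Q (of_coord r)].
Proof.
move=> cQ Qb; apply: bounded_closed_compact; last exact: closed_of_coord.
have [M hM] := norm_le_rho_of_coord.
exists (`|M| * b); split; first exact: num_real.
move=> y yb r Qr; rewrite /= ltW //; apply: le_lt_trans yb.
apply: (le_trans (hM r)); apply: (le_trans (ler_norm _)); rewrite normrM.
apply: ler_wpM2l => //; apply: le_trans (Qb _ Qr).
by rewrite ger0_norm ?(rho_ge0 rhoP).
Qed.

End FiniteDimensional.

Lemma exists_le_least_sup0_ub (R : realType) (V : vectType R)
    (le sle : V -> V -> Prop) (rho : V -> R) x a :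
  mixed_lattice_space le sle -> mixed_lattice_norm le sle rho ->
  sle 0 a -> sle x a ->
  exists u, [/\ sle 0 u, sle x u & forall w, sle 0 w -> sle x w -> le u w].
Proof.
move=> mlP rhoP a0 xa.
have nP := mixed_lattice_norm_norm rhoP.
pose Q w := sle 0 w /\ sle x w /\ le w a.
pose K := [set r | Q (of_coord r)].
have cK : compact K.
  apply: (compact_of_coord nP (b := rho a)).
    apply: rho_closedI; first exact: (rho_closed_sle0 mlP rhoP).
    by apply: rho_closedI; [exact: (rho_closed_sle mlP rhoP) | exact: (rho_closed_le mlP rhoP)].
  by move=> w [w0 [_ wa]]; exact: (rho_sle0_mono mlP rhoP w0 a0 wa).
pose D := [set v : V | sle 0 v /\ sle x v].
move: cK; rewrite compact_In0 => /(_ V D (fun v => K `&` [set r | le (of_coord r) v])) [].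
- exists (fun v => [set r | le (of_coord r) v]) => // v _.
  by apply: (closed_of_coord nP (Q := le^~ v)); exact: (rho_closed_le mlP rhoP).
- move=> D' D'D.
  have [|w [w0 xw wa wD']] := sup0_ub_directed mlP a0 xa (s := finmap.enum_fset D').
    by move=> v vD'; move: (D'D v vD'); rewrite inE.
  exists (passmx.rVof (vbasis {:V}) w) => v vD'; rewrite /K /= !of_coordK.
  by split; [split => // | apply: wD'].
- move=> r hr; have [[r0 [xr _]] _] := hr a (conj a0 xa).
  exists (of_coord r); split => // w w0 xw.
  by have [_] := hr w (conj w0 xw).
Qed.

Theorem theorem4p11 (R : realType) (V : vectType R)
    (le sle : V -> V -> Prop) (rho : V -> R) :
  mixed_lattice_space le sle ->
  mixed_lattice_norm le sle rho ->
  generating_cone sle ->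
  is_lattice sle.
Proof.
move=> mlP rhoP generating.
apply: (lattice_of_sup0 (povs_sle mlP)) => x.
have [p [q [p0 [q0 ->]]]] := generating x.
have pq_p : sle (p - q) p by have := povs_subl (povs_sle mlP) p q0; rewrite subr0.
have [u [u0 xu umin]] := exists_le_least_sup0_ub mlP rhoP p0 pq_p.
by exists u; exact: (le_least_sle_least mlP u0 xu umin).
Qed.
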